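(* Let $\mathrm U\ge0$, $h_b\in[0,1/2]$ and $k\in\mathbb T^2$. If $\lambda\in\rho(A_{1,1}(\mathrm U,k))$ is an eigenvalue of $A(\mathrm U,k)$, then its eigenspace is $\mathbb C\,g(k,\lambda)$, where $$g(k,\lambda):=\big(\hat\upsilon(k)(A_{1,1}(\mathrm U,k)-\lambda\mathfrak 1)^{-1}\mathfrak d(k),\,-1\big)\in\mathcal H.$$ In particular $\lambda$ is a non-degenerate eigenvalue of $A(\mathrm U,k)$.
   Context: Notation: $\mathbb T^2=[-\pi,\pi)^2$ with normalized Haar measure $\nu$; $L^2(\mathbb T^2)=L^2(\mathbb T^2,\nu)$, scalar product antilinear in the first argument. For $f\in\ell^1(\mathbb Z^2)$, $\hat f(k)=\sum_{x}e^{ik\cdot x}f(x)$, $k\in\mathbb R^2$. $\hat{\mathfrak e}_x(p)=e^{ip\cdot x}$; $P_x$ the orthogonal projection onto $\mathbb C\hat{\mathfrak e}_x$; $M_g$ multiplication by $g$; $\cos(q):=\cos q_1+\cos q_2$; $\rho(\cdot)$ denotes the resolvent set. Data: $\epsilon,h_b,\mathrm U\ge0$; $\mathrm u:\mathbb Z^2\to[0,\infty)$, $\upsilon,\mathfrak p_1,\mathfrak p_2:\mathbb Z^2\to\mathbb R$, all invariant under $90^\circ$-rotations, $\mathrm u,\upsilon$ absolutely summable, $\sum_z e^{\alpha_0|z|}|\mathfrak p_j(z)|<\infty$ for some $\alpha_0>0$, $\mathfrak p_2(z)=0$ for $z\notin(2\mathbb Z)^2$, $\mathfrak p_1+\mathfrak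 p_2\neq0$, and for every $k$ some $x$ with $\mathfrak p_2(x)\neq-e^{ik\cdot x/2}\mathfrak p_1(x)$. For $k,p\in\mathbb T^2$: $\mathfrak b(k)=h_b\epsilon(2-\cos k)$, $\mathfrak f(k)(p)=\epsilon(4-\cos(p+k)-\cos p)$, $\mathfrak d(k)(p)=\hat{\mathfrak p}_1(k+p)+\hat{\mathfrak p}_2(k/2+p)$. $A_{1,1}(\mathrm U,k)=M_{\mathfrak f(k)}+\sum_x\mathrm u(x)P_x+\mathrm UP_0$; on $\mathcal H=L^2(\mathbb T^2)\oplus\mathbb C$, $A(\mathrm U,k)(\varphi,z)=\big(A_{1,1}(\mathrm U,k)\varphi+\hat\upsilon(k)z\,\mathfrak d(k),\ \hat\upsilon(k)\langle\mathfrak d(k),\varphi\rangle+\mathfrak b(k)z\big)$. *)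

From HB Require Import structures.
From mathcomp Require Import all_boot all_order all_algebra.
From mathcomp Require Import all_classical all_reals all_analysis.
From mathcomp Require Import complex.
Set Implicit Arguments.
Unset Strict Implicit.
Unset Printing Implicit Defensive.
Import Order.TTheory GRing.Theory Num.Theory.
Local Open Scope classical_set_scope.
Local Open Scope ring_scope.

Section Defs.
Context {R : realType}.
Local Notation C := R[i].

Definition cexpi (t : R) : C := (cos t +i* sin t)%C.

Definition dotZ (k : R * R) (x : int * int) : R :=
  k.1 * x.1%:~R + k.2 * x.2%:~R.

Definition normZ2 (x : int * int) : R :=
  Num.sqrt (x.1%:~R ^+ 2 + x.2%:~R ^+ 2).

Definition rot90 (x : int * int) : int * int := (- x.2, x.1)%R.

Definition rot_invariant (f : int * int -> R) : Prop :=
  forall x, f (rot90 x) = f x.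

Definition abs_summable (f : int * int -> R) : Prop :=
  (\esum_(x in [set: int * int]) (`|f x|)%:E < +oo)%E.

Definition rsum (f : int * int -> R) : R :=
  fine (\esum_(x in [set: int * int]) (Num.max (f x) 0)%:E)
  - fine (\esum_(x in [set: int * int]) (Num.max (- f x) 0)%:E).

Definition csum (f : int * int -> C) : C :=
  (rsum (fun x => complex.Re (f x)) +i* rsum (fun x => complex.Im (f x)))%C.

Definition fhat (f : int * int -> R) (k : R * R) : C :=
  csum (fun x => cexpi (dotZ k x) * (f x)%:C%C).

Definition T2 : set (R * R) :=
  [set p | (- pi <= p.1 < pi) /\ (- pi <= p.2 < pi)].

Definition lam2 := ((@lebesgue_measure R) \x (@lebesgue_measure R))%E.

(** integral w.r.t. the normalized Haar measure nu on T^2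
    (nu = Lebesgue measure on [-pi,pi)^2 divided by 4 pi^2),
    for complex valued functions *)
Definition cint (f : R * R -> C) : C :=
  ((Rintegral lam2 T2 (fun p => complex.Re (f p)) / (4 * pi ^+ 2))
   +i* (Rintegral lam2 T2 (fun p => complex.Im (f p)) / (4 * pi ^+ 2)))%C.

Definition csq (z : C) : R := complex.Re z ^+ 2 + complex.Im z ^+ 2.

(** phi is (a representative of) an element of L^2(T^2, nu) *)
Definition L2 (phi : R * R -> C) : Prop :=
  measurable_fun T2 (fun p => complex.Re (phi p)) /\
  measurable_fun T2 (fun p => complex.Im (phi p)) /\
  (\int[lam2]_(p in T2) (csq (phi p))%:E < +oo)%E.

(** equality in L^2(T^2): equality nu-almost everywhere *)
Definition aeq (phi psi : R * R -> C) : Prop :=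
  {ae lam2, forall p, T2 p -> phi p = psi p}.

Definition l2norm (phi : R * R -> C) : R :=
  Num.sqrt (Rintegral lam2 T2 (fun p => csq (phi p)) / (4 * pi ^+ 2)).

(** scalar product, antilinear in the first argument *)
Definition ip (phi psi : R * R -> C) : C := cint (fun p => (phi p)^* * psi p)%C.

Definition ehat (x : int * int) : R * R -> C := fun p => cexpi (dotZ p x).

Definition Pproj (x : int * int) (phi : R * R -> C) : R * R -> C :=
  fun p => ip (ehat x) phi * ehat x p.

Definition cos2 (q : R * R) : R := cos q.1 + cos q.2.

Definition bfun (eps hb : R) (k : R * R) : R := hb * eps * (2 - cos2 k).

Definition ffun (eps : R) (k : R * R) (p : R * R) : R :=
  eps * (4 - cos2 (p.1 + k.1, p.2 + k.2) - cos2 p).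

Definition dfun (p1 p2 : int * int -> R) (k : R * R) : R * R -> C :=
  fun p => fhat p1 (k.1 + p.1, k.2 + p.2) + fhat p2 (k.1 / 2 + p.1, k.2 / 2 + p.2).

Definition A11 (eps : R) (u : int * int -> R) (U : R) (k : R * R)
  (phi : R * R -> C) : R * R -> C :=
  fun p => (ffun eps k p)%:C%C * phi p
           + csum (fun x => (u x)%:C%C * Pproj x phi p)
           + U%:C%C * Pproj (0, 0) phi p.

(** A(U,k) on H = L^2(T^2) (+) C, first and second components *)
Definition A_1 (eps : R) (u : int * int -> R) (U : R) (ups p1 p2 : int * int -> R)
  (k : R * R) (phi : R * R -> C) (z : C) : R * R -> C :=
  fun p => A11 eps u U k phi p + fhat ups k * z * dfun p1 p2 k p.

Definition A_2 (eps hb : R) (ups p1 p2 : int * int -> R)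
  (k : R * R) (phi : R * R -> C) (z : C) : C :=
  fhat ups k * ip (dfun p1 p2 k) phi + (bfun eps hb k)%:C%C * z.

(** lam is in the resolvent set of the (bounded) operator T on L^2(T^2):
    T - lam is bijective on L^2 (modulo a.e. equality) with bounded inverse *)
Definition in_resolvent (T : (R * R -> C) -> R * R -> C) (lam : C) : Prop :=
  [/\ (forall phi, L2 phi -> aeq (fun p => T phi p - lam * phi p) (fun _ => 0) ->
                   aeq phi (fun _ => 0)),
      (forall psi, L2 psi -> exists phi, L2 phi /\
                   aeq (fun p => T phi p - lam * phi p) psi) &
      (exists M : R, forall phi, L2 phi ->
                   l2norm phi <= M * l2norm (fun p => T phi p - lam * phi p))].

Definition A_eigeq (eps hb : R) (u : int * int -> R) (U : R)
  (ups p1 p2 : int * int -> R) (k : R * R) (lam : C) (phi : R * R -> C) (z : C) : Prop :=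
  aeq (A_1 eps u U ups p1 p2 k phi z) (fun p => lam * phi p) /\
  A_2 eps hb ups p1 p2 k phi z = lam * z.

Definition A_eigenvalue (eps hb : R) (u : int * int -> R) (U : R)
  (ups p1 p2 : int * int -> R) (k : R * R) (lam : C) : Prop :=
  exists (phi : R * R -> C) (z : C), L2 phi /\
    ~ (aeq phi (fun _ => 0) /\ z = 0) /\ A_eigeq eps hb u U ups p1 p2 k lam phi z.

End Defs.

(** If [(phi, z)] is an eigenvector, then [w := phi + v z psi], where [v] is the
    Fourier coefficient [ups^(k)] and [(A11 - lam) psi = d], satisfies
    [(A11 - lam) w = 0] by linearity of [A11]; as [lam] lies in the resolvent set,
    [w = 0], i.e. [phi = - z v psi].  Conversely [(c v psi, - c)] solves the first
    eigenvalue equation by the same linearity, and the second one as soon as the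
    scalar identity [v^2 <d, psi> = b - lam] holds.  This identity is read off the
    second equation of any eigenvector [(phi0, z0)], where [z0 <> 0] by the first
    part.  The analytic input is the linearity of [A11] and of [<e, .>], for bounded
    measurable [e], on L^2 of the torus (absolute summability over Z^2 of
    [u(x) P_x phi], integrability of bounded times square integrable functions on the
    finite-measure torus) and their compatibility with equality almost everywhere. *)
From HB Require Import structures.
From mathcomp Require Import all_boot all_order all_algebra.
From mathcomp Require Import all_classical all_reals all_analysis.
From mathcomp Require Import complex measurable_realfun ring lra.
Set Implicit Arguments.
Unset Strict Implicit.
Unset Printing Implicit Defensive.
Import Order.TTheory GRing.Theory Num.Theory.
Local Open Scope classical_set_scope.
Local Open Scope ring_scope.
Local Notation Re := complex.Re.
Local Notation Im := complex.Im.

Section ComplexParts.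
Context {R : rcfType}.
Implicit Types x y : R[i].

Lemma ReD x y : Re (x + y) = Re x + Re y. Proof. by case: x; case: y. Qed.
Lemma ImD x y : Im (x + y) = Im x + Im y. Proof. by case: x; case: y. Qed.
Lemma ReM x y : Re (x * y) = Re x * Re y - Im x * Im y.
Proof. by case: x; case: y. Qed.
Lemma ImM x y : Im (x * y) = Re x * Im y + Im x * Re y.
Proof. by case: x; case: y. Qed.
Lemma complexP x y : Re x = Re y -> Im x = Im y -> x = y.
Proof. by case: x; case: y => ? ? ? ? /= -> ->. Qed.

End ComplexParts.

(* [card_set_bijP] needs a pointed codomain. *)
HB.instance Definition _ := isPointed.Build int 0%Z.

Section SummableFamilies.
Context {R : realType}.
Implicit Types f g : int * int -> R.

Lemma esumZl (T : choiceType) (S : set T) (c : R) (a : T -> \bar R) :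
  0 <= c -> (forall x, 0 <= a x)%E ->
  (\esum_(x in S) (c%:E * a x) = c%:E * \esum_(x in S) a x)%E.
Proof.
move=> c0 a0; rewrite /esum -ereal_supZl //; last first.
  by apply/set0P; exists 0%E, set0; [exact: fsets_set0 | exact: fsbig_set0].
rewrite image_comp; congr ereal_sup; apply: eq_imagel => A _ /=.
by rewrite ge0_mule_fsumr.
Qed.

Lemma abs_summable_le f g (c : R) : 0 <= c ->
  (forall x, `|f x| <= c * `|g x|) -> abs_summable g -> abs_summable f.
Proof.
move=> c0 fg gs; apply: le_lt_trans (_ : (\esum_(x in _) (c%:E * (`|g x|)%:E) < +oo)%E).
  by apply: le_esum => x _; rewrite -EFinM lee_fin.
by rewrite esumZl ?lte_mul_pinfty // => x; rewrite lee_fin.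
Qed.

Lemma abs_summableD f g : abs_summable f -> abs_summable g ->
  abs_summable (fun x => f x + g x).
Proof.
move=> fs gs; apply: le_lt_trans (_ : (\esum_(x in _) ((`|f x|)%:E + (`|g x|)%:E) < +oo)%E).
  by apply: le_esum => x _; rewrite -EFinD lee_fin ler_normD.
by rewrite esumD ?lte_add_pinfty // => x _; rewrite lee_fin.
Qed.

Lemma abs_summableZ f (r : R) : abs_summable f -> abs_summable (fun x => r * f x).
Proof. by apply: abs_summable_le (normr_ge0 r) _ => x; rewrite normrM. Qed.

Lemma abs_summableN f : abs_summable f -> abs_summable (fun x => - f x).
Proof. by apply: abs_summable_le ler01 _ => x; rewrite normrN mul1r. Qed.

Lemma funrposBnegE f x : f x = f^\+ x - f^\- x.
Proof. by rewrite -[in LHS](funrposBneg f). Qed.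

Lemma abs_summable_funrpos f : abs_summable f -> abs_summable f^\+.
Proof.
apply: abs_summable_le ler01 _ => x; rewrite mul1r ger0_norm ?funrpos_ge0 //.
by rewrite /funrpos ge_max normr_ge0 ler_norm.
Qed.

Lemma abs_summable_funrneg f : abs_summable f -> abs_summable f^\-.
Proof. by move/abs_summableN/abs_summable_funrpos. Qed.

Lemma abs_summable_fin_num f : (forall x, 0 <= f x) -> abs_summable f ->
  \esum_(x in [set: int * int]) (f x)%:E \is a fin_num.
Proof.
move=> f0 fs; rewrite ge0_fin_numE ?esum_ge0 // => [|x _]; last by rewrite lee_fin.
by apply: le_lt_trans fs; apply: le_esum => x _; rewrite lee_fin ler_norm.
Qed.

Local Notation esumZ2 f := (\esum_(x in [set: int * int]) (f x)%:E).

Lemma rsum_posneg (f P N : int * int -> R) :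
  (forall x, 0 <= P x) -> (forall x, 0 <= N x) -> abs_summable P -> abs_summable N ->
  (forall x, f x = P x - N x) ->
  rsum f = fine (esumZ2 P) - fine (esumZ2 N).
Proof.
move=> P0 N0 Ps Ns fE.
have fs : abs_summable f.
  rewrite (_ : f = fun x => P x + - N x); last exact/funext.
  exact: abs_summableD Ps (abs_summableN Ns).
have summ g : abs_summable g -> summable [set: int * int] (EFin \o g) by [].
have fin_pos := abs_summable_fin_num (funrpos_ge0 f) (abs_summable_funrpos fs).
have fin_neg := abs_summable_fin_num (funrneg_ge0 f) (abs_summable_funrneg fs).
rewrite /rsum -!fineB // ?abs_summable_fin_num //.
rewrite -(esumB (summ _ Ps) (summ _ Ns)) => [|x _|x _]; rewrite ?lee_fin //.
by congr (fine (_ - _)); apply: eq_esum => x _;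
  rewrite ?funeposE ?funenegE /= EFin_max fE.
Qed.

Lemma fine_esumD f g : (forall x, 0 <= f x) -> (forall x, 0 <= g x) ->
  abs_summable f -> abs_summable g ->
  fine (esumZ2 (fun x => f x + g x)) = fine (esumZ2 f) + fine (esumZ2 g).
Proof.
move=> f0 g0 fs gs; under eq_esum do rewrite EFinD.
by rewrite esumD ?fineD ?abs_summable_fin_num // => x _; rewrite lee_fin.
Qed.

Lemma fine_esumZl f (r : R) : 0 <= r -> (forall x, 0 <= f x) -> abs_summable f ->
  fine (esumZ2 (fun x => r * f x)) = r * fine (esumZ2 f).
Proof.
move=> r0 f0 fs; under eq_esum do rewrite EFinM.
by rewrite esumZl ?fineM ?abs_summable_fin_num // => x; rewrite lee_fin.
Qed.

Lemma rsumD f g : abs_summable f -> abs_summable g ->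
  rsum (fun x => f x + g x) = rsum f + rsum g.
Proof.
move=> fs gs.
rewrite (@rsum_posneg _ (fun x => f^\+ x + g^\+ x) (fun x => f^\- x + g^\- x)).
- rewrite (fine_esumD (funrpos_ge0 f) (funrpos_ge0 g)
    (abs_summable_funrpos fs) (abs_summable_funrpos gs)).
  rewrite (fine_esumD (funrneg_ge0 f) (funrneg_ge0 g)
    (abs_summable_funrneg fs) (abs_summable_funrneg gs)).
  by rewrite /rsum addrACA opprD.
- by move=> x; rewrite addr_ge0 ?funrpos_ge0.
- by move=> x; rewrite addr_ge0 ?funrneg_ge0.
- exact: abs_summableD (abs_summable_funrpos fs) (abs_summable_funrpos gs).
- exact: abs_summableD (abs_summable_funrneg fs) (abs_summable_funrneg gs).
- by move=> x; rewrite [f x]funrposBnegE [g x]funrposBnegE; ring.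
Qed.

Lemma rsumN f : rsum (fun x => - f x) = - rsum f.
Proof.
by rewrite /rsum opprB; congr (_ - fine _); apply: eq_esum => x _; rewrite opprK.
Qed.

Lemma rsumZ f r : abs_summable f -> rsum (fun x => r * f x) = r * rsum f.
Proof.
move=> fs; wlog r0 : r / 0 <= r.
  move=> ge0_rsumZ; have [/ge0_rsumZ//|/ltW r0] := leP 0 r.
  have -> : (fun x => r * f x) = (fun x => - (- r * f x)).
    by apply/funext => x; rewrite mulNr opprK.
  by rewrite rsumN ge0_rsumZ ?oppr_ge0 // mulNr opprK.
rewrite (@rsum_posneg _ (fun x => r * f^\+ x) (fun x => r * f^\- x)).
- rewrite (fine_esumZl r0 (funrpos_ge0 f) (abs_summable_funrpos fs)).
  by rewrite (fine_esumZl r0 (funrneg_ge0 f) (abs_summable_funrneg fs)) /rsum mulrBr.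
- by move=> x; rewrite mulr_ge0 ?funrpos_ge0.
- by move=> x; rewrite mulr_ge0 ?funrneg_ge0.
- exact/abs_summableZ/abs_summable_funrpos.
- exact/abs_summableZ/abs_summable_funrneg.
- by move=> x; rewrite -mulrBr -funrposBnegE.
Qed.

Lemma normr_rsum_le f b : (forall x, `|f x| <= b x) -> abs_summable b ->
  `|rsum f| <= fine (esumZ2 b).
Proof.
move=> fb bs; have b0 x : 0 <= b x by exact: le_trans (fb x).
have part g : (forall x, 0 <= g x <= b x) -> 0 <= fine (esumZ2 g) <= fine (esumZ2 b).
  move=> gb; have g0 x : 0 <= g x by case/andP: (gb x).
  have gs : abs_summable g.
    apply: abs_summable_le ler01 _ bs => x.
    by rewrite mul1r !ger0_norm //; case/andP: (gb x).
  rewrite fine_ge0 ?esum_ge0 //= => [|x _]; last by rewrite lee_fin.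
  rewrite fine_le ?abs_summable_fin_num //; apply: le_esum => x _.
  by rewrite lee_fin; case/andP: (gb x).
have /andP[p0 pb] : 0 <= fine (esumZ2 f^\+) <= fine (esumZ2 b).
  apply: part => x; rewrite funrpos_ge0 /funrpos ge_max b0 andbT.
  exact: le_trans (ler_norm _) (fb x).
have /andP[n0 nb] : 0 <= fine (esumZ2 f^\-) <= fine (esumZ2 b).
  apply: part => x; rewrite funrneg_ge0 /funrneg ge_max b0 andbT.
  by rewrite lerNl; exact: lerNnormlW (fb x).
by rewrite /rsum ler_norml; apply/andP; split; lra.
Qed.

Lemma rsum_comb (f g h : int * int -> R) (r t : R) :
  abs_summable f -> abs_summable g -> abs_summable h ->
  rsum (fun x => f x + (r * g x + t * h x)) = rsum f + (r * rsum g + t * rsum h).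
Proof.
move=> fs gs hs; have [rgs ths] := (abs_summableZ r gs, abs_summableZ t hs).
by rewrite (rsumD fs (abs_summableD rgs ths)) (rsumD rgs ths) (rsumZ _ gs) (rsumZ _ hs).
Qed.

Lemma abs_summable_exp_weight (a : R) f : 0 < a ->
  abs_summable (fun x => expR (a * normZ2 x) * f x) -> abs_summable f.
Proof.
move=> a0; apply: abs_summable_le ler01 _ => x; rewrite mul1r normrM ler_peMl //.
rewrite ger0_norm ?expR_ge0 // (le_trans _ (expR_ge1Dx _)) //.
by rewrite lerDl mulr_ge0 ?(ltW a0) // sqrtr_ge0.
Qed.

Lemma measurable_esumZ2 d (T : measurableType d) (D : set T)
    (h : int * int -> T -> \bar R) :
  (forall x t, 0 <= h x t)%E -> (forall x, measurable_fun D (h x)) ->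
  measurable_fun D (fun t => \esum_(x in [set: int * int]) h x t).
Proof.
move=> h0 mh.
have [e e_bij] : exists e : nat -> int * int, set_bij [set: nat] [set: int * int] e.
  apply/card_set_bijP/card_esym/eq_card_nat; first exact: countableP.
  apply/infiniteP/pcard_injP; exists (fun n : nat => (n%:Z, 0%Z)).
  by move=> m n _ _ [].
rewrite (_ : (fun t => _) = fun t => (\sum_(i <oo | i \in predT) h (e i) t)%E).
  exact: ge0_emeasurable_sum.
apply/funext => t.
by rewrite (@reindex_esum _ _ _ _ _ _ (fun x => h x t) e_bij) nneseries_esumT.
Qed.

Lemma measurable_rsum d (T : measurableType d) (D : set T) (g : int * int -> T -> R) :
  (forall x, measurable_fun D (g x)) -> measurable_fun D (fun t => rsum (fun x => g x t)).
Proof.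
move=> mg; apply: measurable_funB;
  apply: measurableT_comp (fine_measurable measurableT) _;
  apply: measurable_esumZ2 => [x t|x]; rewrite ?lee_fin ?le_max ?lexx ?orbT //;
  apply/measurable_EFinP; apply: measurable_maxr (measurable_cst _);
  [exact: mg | exact/measurable_funN/mg].
Qed.

End SummableFamilies.

Section Complexification.
Context {R : rcfType} (X : Type) (P : (X -> R) -> Prop) (L : (X -> R) -> R).
Hypothesis L_comb : forall f g h r t, P f -> P g -> P h ->
  L (fun x => f x + (r * g x + t * h x)) = L f + (r * L g + t * L h).

Lemma complexify_comb (a b : X -> R[i]) (s : R[i]) :
  P (fun x => Re (a x)) -> P (fun x => Im (a x)) ->
  P (fun x => Re (b x)) -> P (fun x => Im (b x)) ->
  (L (fun x => Re (a x + s * b x)) +i* L (fun x => Im (a x + s * b x)))%C =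
  (L (fun x => Re (a x)) +i* L (fun x => Im (a x)))%C
  + s * (L (fun x => Re (b x)) +i* L (fun x => Im (b x)))%C.
Proof.
case: s => s1 s2 ar ai br bi; apply: complexP => /=.
- rewrite -mulNr -(L_comb _ _ ar br bi); congr L; apply/funext => x.
  by rewrite ReD ReM /= mulNr.
- rewrite -(L_comb _ _ ai bi br); congr L; apply/funext => x.
  by rewrite ImD ImM.
Qed.

End Complexification.

Section ComplexSums.
Context {R : realType}.
Local Notation C := R[i].
Implicit Types a b : int * int -> C.

Definition csummable a :=
  abs_summable (fun x => Re (a x)) /\ abs_summable (fun x => Im (a x)).

Lemma csum_comb a b (s : C) : csummable a -> csummable b ->
  csum (fun x => a x + s * b x) = csum a + s * csum b.
Proof.
by move=> [ar ai] [br bi]; rewrite /csum (complexify_comb (@rsum_comb R) s ar ai br bi).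
Qed.

Lemma csum_eq0 a : (forall x, a x = 0) -> csum a = 0.
Proof.
move=> a0; have -> : a = fun=> 0 by exact/funext.
by rewrite /csum /rsum /= oppr0 maxxx esum1 // subrr.
Qed.

Lemma csummable_scale_bounded (u : int * int -> R) a (K : R) : abs_summable u ->
  (forall x, `|Re (a x)| <= K /\ `|Im (a x)| <= K) ->
  csummable (fun x => (u x)%:C%C * a x).
Proof.
move=> us aK; have K0 : 0 <= K by case: (aK (0, 0)%Z) => /(le_trans (normr_ge0 _)).
split; apply: abs_summable_le K0 _ us => x; case: (aK x) => ? ?;
  by rewrite ?ReM ?ImM /= mul0r ?subr0 ?addr0 normrM mulrC ler_wpM2r.
Qed.

End ComplexSums.

Instance lam2_ae_filter {R : realType} : Filter (almost_everywhere (@lam2 R)) :=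
  ae_filter_ringOfSetsType lam2.

Section TorusIntegrals.
Context {R : realType}.
Local Notation C := R[i].
Local Notation mu := (@lam2 R).
Local Notation Rintegrable f := (mu.-integrable T2 (EFin \o f)).
Local Notation RI f := (Rintegral mu T2 f).
Implicit Types (f g h : R * R -> R) (e phi psi w : R * R -> C).

Lemma T2_setX : T2 = `[- pi, pi[%classic `*` `[- pi, pi[%classic :> set (R * R).
Proof. by apply/seteqP; split => p /=; rewrite !in_itv. Qed.

Lemma measurable_T2 : measurable (@T2 R).
Proof. by rewrite T2_setX; apply: measurableX. Qed.

Lemma lam2_T2_lty : (mu T2 < +oo)%E.
Proof.
rewrite T2_setX /lam2 product_measure1E //.
have := @lebesgue_measure_itv R `[(- pi)%R, pi[ => /= ->.
by case: ifP => _; rewrite ?mul0e -?EFinM ?ltry.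
Qed.

Lemma Rintegrable_cst (c : R) : Rintegrable (fun=> c).
Proof.
apply/integrableP; split; first exact/measurable_EFinP/measurable_cst.
rewrite (_ : (fun x => _) = cst (`|c|%:E)) // integral_cst; last exact: measurable_T2.
by apply: lte_mul_pinfty => //; exact: lam2_T2_lty.
Qed.

Lemma RintegrableD f g : Rintegrable f -> Rintegrable g ->
  Rintegrable (fun p => f p + g p).
Proof.
move=> fi gi; rewrite (_ : EFin \o _ = (EFin \o f) \+ (EFin \o g)).
  by apply: integrableD => //; exact: measurable_T2.
by apply/funext => p /=; rewrite EFinD.
Qed.

Lemma RintegrableZl f (r : R) : Rintegrable f -> Rintegrable (fun p => r * f p).
Proof.
move=> fi; rewrite (_ : EFin \o _ = (fun p => r%:E * (EFin \o f) p)%E).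
  by apply: integrableZl => //; exact: measurable_T2.
by apply/funext => p /=; rewrite EFinM.
Qed.

Lemma Rintegrable_le f g : measurable_fun T2 f -> Rintegrable g ->
  (forall p, T2 p -> `|f p| <= g p) -> Rintegrable f.
Proof.
move=> mf gi fg; apply: (@le_integrable _ _ _ mu T2 measurable_T2 _ _ _ _ gi).
  exact/measurable_EFinP.
by move=> p Tp; rewrite lee_fin (le_trans (fg p Tp)) // ler_norm.
Qed.

Definition haar_int f := RI f / (4 * pi ^+ 2).

Lemma haar_int_comb f g h (r t : R) :
  Rintegrable f -> Rintegrable g -> Rintegrable h ->
  haar_int (fun p => f p + (r * g p + t * h p)) =
  haar_int f + (r * haar_int g + t * haar_int h).
Proof.
move=> fi gi hi; have [rgi thi] := (RintegrableZl r gi, RintegrableZl t hi).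
rewrite /haar_int (@RintegralD _ _ _ mu _ _ _ measurable_T2 fi (RintegrableD rgi thi)).
rewrite (@RintegralD _ _ _ mu _ _ _ measurable_T2 rgi thi).
by rewrite !(@RintegralZl _ _ _ mu _ _ _ measurable_T2) // !mulrDl !mulrA.
Qed.

Lemma Rintegral_ae0 f : measurable_fun T2 f ->
  {ae mu, forall p, T2 p -> f p = 0} -> RI f = 0.
Proof.
move=> mf f0; rewrite /Rintegral (@ae_eq_integral _ _ _ mu T2 (cst 0%E)) ?integral0 //.
- exact: measurable_T2.
- exact/measurable_EFinP.
- by apply: filterS f0 => p f0p Tp; rewrite /= f0p.
Qed.

Lemma normr_Rintegral_le f g : Rintegrable f -> Rintegrable g ->
  (forall p, T2 p -> `|f p| <= g p) -> `|RI f| <= RI g.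
Proof.
move=> fi gi fg.
apply: le_trans (@le_normr_Rintegral _ _ _ mu _ _ measurable_T2 fi) _.
have mf : measurable_fun T2 f by case/integrableP: fi => /measurable_EFinP.
apply: (@le_Rintegral _ _ _ mu) => //; first exact: measurable_T2.
apply: Rintegrable_le gi _ => [|p Tp]; last by rewrite normr_id fg.
exact: measurableT_comp.
Qed.

Definition cmeasurable phi :=
  measurable_fun T2 (fun p => Re (phi p)) /\ measurable_fun T2 (fun p => Im (phi p)).

Lemma cmeasurable_cst (c : C) : cmeasurable (fun=> c).
Proof. by split; exact: measurable_cst. Qed.

Lemma cmeasurableD phi psi : cmeasurable phi -> cmeasurable psi ->
  cmeasurable (fun p => phi p + psi p).
Proof.
move=> [? ?] [? ?]; split.
- by under eq_fun do rewrite ReD; exact: measurable_funD.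
- by under eq_fun do rewrite ImD; exact: measurable_funD.
Qed.

Lemma cmeasurableM phi psi : cmeasurable phi -> cmeasurable psi ->
  cmeasurable (fun p => phi p * psi p).
Proof.
move=> [? ?] [? ?]; split.
- by under eq_fun do rewrite ReM; apply: measurable_funB; exact: measurable_funM.
- by under eq_fun do rewrite ImM; apply: measurable_funD; exact: measurable_funM.
Qed.

Lemma cmeasurable_conj phi : cmeasurable phi -> cmeasurable (fun p => (phi p)^*%C).
Proof.
case=> mr mi; split.
- by rewrite (_ : (fun p => _) = fun p => Re (phi p)) //; apply/funext => p; case: (phi p).
- rewrite (_ : (fun p => _) = fun p => - Im (phi p)); first exact: measurable_funN.
  by apply/funext => p; case: (phi p).
Qed.

Lemma L2_cmeasurable phi : L2 phi -> cmeasurable phi.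
Proof. by case=> ? []. Qed.

Lemma csq_ge0 (z : C) : 0 <= csq z.
Proof. by rewrite addr_ge0 ?sqr_ge0. Qed.

Lemma Rintegrable_csq phi : L2 phi -> Rintegrable (fun p => csq (phi p)).
Proof.
move=> [mr [mi fin]]; apply/integrableP; split.
  by apply/measurable_EFinP; apply: measurable_funD; exact: measurable_funX.
rewrite (_ : (fun x => _) = fun p => (csq (phi p))%:E) //.
by apply/funext => p /=; rewrite ger0_norm ?csq_ge0.
Qed.

Lemma csq_comb_le (a b s : C) : csq (a + s * b) <= 2 * csq a + 2 * (csq s * csq b).
Proof.
rewrite /csq ReD ImD ReM ImM.
set u := Re s * Re b - Im s * Im b; set v := Re s * Im b + Im s * Re b.
have -> : (Re s ^+ 2 + Im s ^+ 2) * (Re b ^+ 2 + Im b ^+ 2) = u ^+ 2 + v ^+ 2.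
  by rewrite /u /v; ring.
have := sqr_ge0 (Re a - u); have := sqr_ge0 (Im a - v); nra.
Qed.

Lemma L2_comb phi psi (s : C) : L2 phi -> L2 psi -> L2 (fun p => phi p + s * psi p).
Proof.
move=> L2phi L2psi.
have [mr mi] := cmeasurableD (L2_cmeasurable L2phi)
  (cmeasurableM (cmeasurable_cst s) (L2_cmeasurable L2psi)).
split; [done | split; [done|]].
have /integrableP[mmaj] := RintegrableD (RintegrableZl 2 (Rintegrable_csq L2phi))
  (RintegrableZl (2 * csq s) (Rintegrable_csq L2psi)).
apply: le_lt_trans; apply: ge0_le_integral => //.
- exact: measurable_T2.
- by move=> p _; rewrite lee_fin csq_ge0.
- by apply/measurable_EFinP; apply: measurable_funD; exact: measurable_funX.
- by apply: measurableT_comp => //; exact: mmaj.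
- move=> p _ /=; rewrite lee_fin (le_trans (csq_comb_le _ _ _)) // -mulrA.
  exact: ler_norm.
Qed.

Definition bounded_measurable e (M : R) :=
  [/\ cmeasurable e, 0 <= M & forall p, T2 p -> `|Re (e p)| <= M /\ `|Im (e p)| <= M].

(* Dominates [|Re phi| + |Im phi|], as [|t| <= 1 + t^2]. *)
Definition l2_majorant phi p := 2 + csq (phi p).

Lemma Rintegrable_l2_majorant phi : L2 phi -> Rintegrable (l2_majorant phi).
Proof.
by move=> L2phi; exact: RintegrableD (Rintegrable_cst 2) (Rintegrable_csq L2phi).
Qed.

Lemma normr_conjM_le (z w : C) (M : R) : `|Re z| <= M -> `|Im z| <= M ->
  `|Re (z^* * w)%C| <= M * (2 + csq w) /\ `|Im (z^* * w)%C| <= M * (2 + csq w).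
Proof.
case: z => a b; case: w => c d /= aM bM; rewrite /csq /=.
have abs_le_sq (x : R) : `|x| <= 1 + x ^+ 2.
  by case: (leP 0 x) => ?; [rewrite ger0_norm | rewrite ltr0_norm]; nra.
have M0 : 0 <= M := le_trans (normr_ge0 a) aM.
have := normr_ge0 a; have := normr_ge0 b; have := normr_ge0 c; have := normr_ge0 d.
have := abs_le_sq c; have := abs_le_sq d.
move=> ? ? ? ? ? ?; split.
- by apply: le_trans (ler_normB _ _) _; rewrite !normrM ?normrN; nra.
- by apply: le_trans (ler_normD _ _) _; rewrite !normrM ?normrN; nra.
Qed.

Section BoundedWeight.
Variables (e : R * R -> C) (M : R).
Hypothesis e_bdd : bounded_measurable e M.

Lemma conjM_bound phi p : T2 p ->
  `|Re ((e p)^* * phi p)%C| <= M * l2_majorant phi p /\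
  `|Im ((e p)^* * phi p)%C| <= M * l2_majorant phi p.
Proof. by case: e_bdd => _ _ eM /eM[]; exact: normr_conjM_le. Qed.

Lemma Rintegrable_conjM phi : L2 phi ->
  Rintegrable (fun p => Re ((e p)^* * phi p)%C) /\
  Rintegrable (fun p => Im ((e p)^* * phi p)%C).
Proof.
move=> L2phi; case: (e_bdd) => me _ _.
have [mr mi] := cmeasurableM (cmeasurable_conj me) (L2_cmeasurable L2phi).
have maj := RintegrableZl M (Rintegrable_l2_majorant L2phi).
by split; [apply: Rintegrable_le mr maj _ | apply: Rintegrable_le mi maj _] =>
  p /(conjM_bound phi)[].
Qed.

Lemma ip_comb phi psi (s : C) : L2 phi -> L2 psi ->
  ip e (fun p => phi p + s * psi p) = ip e phi + s * ip e psi.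
Proof.
move=> L2phi L2psi; have [ar ai] := Rintegrable_conjM L2phi.
have [br bi] := Rintegrable_conjM L2psi.
transitivity (cint (fun p => (e p)^* * phi p + s * ((e p)^* * psi p))%C).
  by congr cint; apply/funext => p; rewrite mulrDr mulrCA.
by have := complexify_comb (@haar_int_comb) s ar ai br bi; apply.
Qed.

Lemma ip_null w : L2 w -> aeq w (fun=> 0) -> ip e w = 0.
Proof.
case: e_bdd => me _ _ /L2_cmeasurable mw w0.
have [mr mi] := cmeasurableM (cmeasurable_conj me) mw.
rewrite /ip /cint !Rintegral_ae0 ?mul0r //;
  by apply: filterS w0 => p w0p /w0p ->; rewrite mulr0.
Qed.

Lemma ip_aeZ phi psi (a : C) : L2 phi -> L2 psi ->
  aeq phi (fun p => a * psi p) -> ip e phi = a * ip e psi.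
Proof.
move=> L2phi L2psi phi_psi.
have w0 : aeq (fun p => phi p + - a * psi p) (fun=> 0).
  by apply: filterS phi_psi => p + Tp => /(_ Tp) ->; rewrite mulNr subrr.
have := ip_null (L2_comb (- a) L2phi L2psi) w0.
by rewrite ip_comb // mulNr => /eqP; rewrite subr_eq0 => /eqP.
Qed.

Lemma normr_ip_le phi : L2 phi ->
  `|Re (ip e phi)| <= M * haar_int (l2_majorant phi) /\
  `|Im (ip e phi)| <= M * haar_int (l2_majorant phi).
Proof.
move=> L2phi; have [ar ai] := Rintegrable_conjM L2phi.
have maj := RintegrableZl M (Rintegrable_l2_majorant L2phi).
have N0 : 0 < (4 * pi ^+ 2)^-1 :> R by rewrite invr_gt0 mulr_gt0 ?exprn_gt0 ?pi_gt0.
have -> : M * haar_int (l2_majorant phi) = haar_int (fun p => M * l2_majorant phi p).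
  rewrite /haar_int (@RintegralZl _ _ _ mu) ?mulrA //; first exact: measurable_T2.
  exact: Rintegrable_l2_majorant.
rewrite /ip /cint /haar_int /= !normrM (gtr0_norm N0) !ler_pM2r //.
by split; apply: normr_Rintegral_le => // p /(conjM_bound phi)[].
Qed.

End BoundedWeight.

End TorusIntegrals.

Section Operator.
Context {R : realType}.
Local Notation C := R[i].
Implicit Types (phi psi w : R * R -> C).

Lemma cmeasurable_cexpi (g : R * R -> R) : measurable_fun setT g ->
  cmeasurable (fun p => cexpi (g p)).
Proof.
move=> mg; split; apply: (measurable_funS measurableT) => //.
- exact: measurableT_comp (continuous_measurable_fun (@continuous_cos R)) mg.
- exact: measurableT_comp (continuous_measurable_fun (@continuous_sin R)) mg.
Qed.

Lemma measurable_dotZ_shift (a : R * R) (x : int * int) :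
  measurable_fun setT (fun p : R * R => dotZ (a.1 + p.1, a.2 + p.2) x).
Proof.
by apply: measurable_funD; apply: measurable_funM => //; apply: measurable_funD.
Qed.

Lemma bounded_ehat x : bounded_measurable (@ehat R x) 1.
Proof.
split=> //; last by move=> p _; rewrite /= !(cos_max, sin_max).
apply: cmeasurable_cexpi; apply: measurable_funD; exact: measurable_funM.
Qed.

Local Notation esum_abs f := (fine (\esum_(x in [set: int * int]) (`|f x|)%:E)).

Lemma cmeasurable_fhat_shift (f : int * int -> R) (a : R * R) :
  cmeasurable (fun p => fhat f (a.1 + p.1, a.2 + p.2)).
Proof.
have term x := cmeasurableM (cmeasurable_cexpi (measurable_dotZ_shift a x))
  (cmeasurable_cst (f x)%:C%C).
by split; apply: measurable_rsum => x; case: (term x).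
Qed.

Lemma normr_fhat_le (f : int * int -> R) q : abs_summable f ->
  `|Re (fhat f q)| <= esum_abs f /\ `|Im (fhat f q)| <= esum_abs f.
Proof.
move=> fs; have abs_fs : abs_summable (fun x => `|f x|).
  by apply: abs_summable_le ler01 _ fs => x; rewrite normr_id mul1r.
by split; apply: normr_rsum_le abs_fs => x /=;
  rewrite ?mulr0 ?subr0 ?add0r normrM ler_piMl ?(cos_max, sin_max).
Qed.

Lemma bounded_dfun (p1 p2 : int * int -> R) (k : R * R) :
  abs_summable p1 -> abs_summable p2 ->
  bounded_measurable (dfun p1 p2 k) (esum_abs p1 + esum_abs p2).
Proof.
move=> p1s p2s; split.
- exact: cmeasurableD (cmeasurable_fhat_shift p1 k)
    (cmeasurable_fhat_shift p2 (k.1 / 2, k.2 / 2)).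
- by rewrite addr_ge0 // fine_ge0 // esum_ge0 // => x _; rewrite lee_fin.
- move=> p _; have [b1 b2] := normr_fhat_le (k.1 + p.1, k.2 + p.2) p1s.
  have [b3 b4] := normr_fhat_le (k.1 / 2 + p.1, k.2 / 2 + p.2) p2s.
  by rewrite /dfun ReD ImD; split; apply: le_trans (ler_normD _ _) _; apply: lerD.
Qed.

Lemma Pproj_bound phi x p : L2 phi ->
  `|Re (Pproj x phi p)| <= 2 * haar_int (l2_majorant phi) /\
  `|Im (Pproj x phi p)| <= 2 * haar_int (l2_majorant phi).
Proof.
move=> L2phi; have [] := normr_ip_le (bounded_ehat x) L2phi; rewrite !mul1r.
rewrite /Pproj; case: (ip _ _) => a b /= aK bK.
have [c1 s1] := (cos_max (dotZ p x), sin_max (dotZ p x)).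
have := normr_ge0 a; have := normr_ge0 b.
have := normr_ge0 (cos (dotZ p x)); have := normr_ge0 (sin (dotZ p x)).
move=> ? ? ? ?; split.
- by apply: le_trans (ler_normB _ _) _; rewrite !normrM; nra.
- by apply: le_trans (ler_normD _ _) _; rewrite !normrM; nra.
Qed.

Section A11Linearity.
Variables (eps U : R) (u : int * int -> R) (k : R * R).
Hypothesis u_summable : abs_summable u.
Local Notation A := (A11 eps u U k).

Lemma A11_comb phi psi (s : C) p : L2 phi -> L2 psi ->
  A (fun q => phi q + s * psi q) p = A phi p + s * A psi p.
Proof.
move=> L2phi L2psi; rewrite /A11.
have csummable_u phi' : L2 phi' -> csummable (fun x => (u x)%:C%C * Pproj x phi' p).
  move=> L2phi'.
  exact: csummable_scale_bounded u_summable (fun x => Pproj_bound x p L2phi').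
have -> : (fun x => (u x)%:C%C * Pproj x (fun q => phi q + s * psi q) p) =
    (fun x => (u x)%:C%C * Pproj x phi p + s * ((u x)%:C%C * Pproj x psi p)).
  by apply/funext => x; rewrite /Pproj (ip_comb (bounded_ehat x) s L2phi L2psi); ring.
rewrite csum_comb; [|exact: csummable_u..].
by rewrite /Pproj (ip_comb (bounded_ehat (0, 0)%Z) s L2phi L2psi); ring.
Qed.

Lemma A11_null w : L2 w -> aeq w (fun=> 0) -> aeq (A w) (fun=> 0).
Proof.
move=> L2w w0; apply: (filterS _ w0) => p w0p Tp.
rewrite /A11 /Pproj csum_eq0 => [|x]; last first.
  by rewrite (ip_null (bounded_ehat x)) // mul0r mulr0.
by rewrite (ip_null (bounded_ehat _)) // w0p // !(mul0r, mulr0, addr0).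
Qed.

Lemma A11_aeZ phi psi (a : C) : L2 phi -> L2 psi ->
  aeq phi (fun p => a * psi p) -> aeq (A phi) (fun p => a * A psi p).
Proof.
move=> L2phi L2psi phi_psi.
have w0 : aeq (fun p => phi p + - a * psi p) (fun=> 0).
  by apply: filterS phi_psi => p + Tp => /(_ Tp) ->; rewrite mulNr subrr.
apply: filterS (A11_null (L2_comb (- a) L2phi L2psi) w0) => p + Tp.
by rewrite A11_comb // mulNr => /(_ Tp) /eqP; rewrite subr_eq0 => /eqP.
Qed.

End A11Linearity.

End Operator.

Section Eigenspace.
Context {R : realType}.
Local Notation C := R[i].
Variables (eps hb U : R) (u ups p1 p2 : int * int -> R) (k : R * R) (lam : C).
Variable psi : R * R -> C.
Hypotheses (u_summable : abs_summable u) (p1_summable : abs_summable p1)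
  (p2_summable : abs_summable p2) (L2psi : L2 psi).
Hypothesis psi_eq : aeq (fun p => A11 eps u U k psi p - lam * psi p) (dfun p1 p2 k).

Local Notation A := (A11 eps u U k).
Hypothesis lam_inj : forall w, L2 w ->
  aeq (fun p => A w p - lam * w p) (fun=> 0) -> aeq w (fun=> 0).
Local Notation v := (fhat ups k).
Local Notation eigeq := (A_eigeq eps hb u U ups p1 p2 k lam).

Lemma eigvec_first_component phi z :
  L2 phi -> eigeq phi z -> aeq phi (fun p => - z * (v * psi p)).
Proof.
move=> L2phi [eq1 _].
have w0 : aeq (fun p => phi p + v * z * psi p) (fun=> 0).
  apply: lam_inj; first exact: L2_comb.
  apply: filterS2 eq1 psi_eq => p eq1p eq2p Tp.
  have := eq1p Tp; rewrite /A_1 -(eq2p Tp) => {}eq1p.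
  rewrite A11_comb // -[A phi p](addrK (v * z * (A psi p - lam * psi p))) eq1p; ring.
apply: filterS w0 => p + Tp => /(_ Tp) /eqP; rewrite addr_eq0 => /eqP ->; ring.
Qed.

Lemma eigvec_second_component_neq0 phi z :
  L2 phi -> ~ (aeq phi (fun=> 0) /\ z = 0) -> eigeq phi z -> z != 0.
Proof.
move=> L2phi nontrivial eig; apply/eqP => z0; apply: nontrivial; split => //.
apply: filterS (eigvec_first_component L2phi eig) => p + Tp => /(_ Tp) ->.
by rewrite z0 oppr0 mul0r.
Qed.

Lemma eigvec_secular_eq phi z :
  L2 phi -> z != 0 -> eigeq phi z ->
  v * (v * ip (dfun p1 p2 k) psi) = (bfun eps hb k)%:C%C - lam.
Proof.
move=> L2phi z0 eig; have phi_psi := eigvec_first_component L2phi eig.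
have {}phi_psi : aeq phi (fun p => - z * v * psi p).
  by apply: filterS phi_psi => p + Tp => /(_ Tp) ->; rewrite mulrA.
case: eig => _.
rewrite /A_2 (ip_aeZ (bounded_dfun k p1_summable p2_summable) L2phi L2psi phi_psi).
by move=> eq2; apply: (mulIf z0); rewrite mulrBl -[lam * z]eq2; ring.
Qed.

Lemma eigvec_of_multiple phi c :
  v * (v * ip (dfun p1 p2 k) psi) = (bfun eps hb k)%:C%C - lam ->
  L2 phi -> aeq phi (fun p => c * (v * psi p)) -> eigeq phi (c * -1).
Proof.
move=> secular L2phi phi_psi.
have {}phi_psi : aeq phi (fun p => c * v * psi p).
  by apply: filterS phi_psi => p + Tp => /(_ Tp) ->; rewrite mulrA.
split.
- have A_phi_psi : aeq (A phi) (fun p => c * v * A psi p) by exact: A11_aeZ.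
  move: phi_psi A_phi_psi psi_eq; apply: filterS3 => p e1 e2 e3 Tp.
  by rewrite /A_1 (e2 Tp) (e1 Tp) -(e3 Tp); ring.
- rewrite /A_2 (ip_aeZ (bounded_dfun k p1_summable p2_summable) L2phi L2psi phi_psi).
  set I := ip (dfun p1 p2 k) psi.
  rewrite (_ : v * (c * v * I) = c * (v * (v * I))); last by ring.
  by rewrite secular; ring.
Qed.

End Eigenspace.

Theorem corollary4p6 (R : realType) (eps hb U : R)
  (u ups p1 p2 : int * int -> R) (k : R * R) (lam : R[i]) :
  0 <= eps -> 0 <= hb -> hb <= 1 / 2 -> 0 <= U ->
  (forall x, 0 <= u x) ->
  rot_invariant u -> rot_invariant ups -> rot_invariant p1 -> rot_invariant p2 ->
  abs_summable u -> abs_summable ups ->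
  (exists2 alpha0 : R, 0 < alpha0 &
     abs_summable (fun x => expR (alpha0 * normZ2 x) * p1 x) /\
     abs_summable (fun x => expR (alpha0 * normZ2 x) * p2 x)) ->
  (forall x : int * int, ~ ((2 %| x.1)%Z /\ (2 %| x.2)%Z) -> p2 x = 0) ->
  (exists x, p1 x + p2 x <> 0) ->
  (forall k' : R * R, T2 k' -> exists x,
     ((p2 x)%:C <> - cexpi (dotZ k' x / 2) * (p1 x)%:C)%C) ->
  T2 k ->
  in_resolvent (A11 eps u U k) lam ->
  A_eigenvalue eps hb u U ups p1 p2 k lam ->
  forall psi : R * R -> R[i], L2 psi ->
    aeq (fun p => A11 eps u U k psi p - lam * psi p) (dfun p1 p2 k) ->
    (* the eigenspace of lam is C g(k,lam), g = (ups^(k) psi, -1) *)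
    forall (phi : R * R -> R[i]) (z : R[i]), L2 phi ->
      (A_eigeq eps hb u U ups p1 p2 k lam phi z <->
       exists c : R[i], aeq phi (fun p => c * (fhat ups k * psi p)) /\ z = c * (-1)).
Proof.
move=> _ _ _ _ _ _ _ _ _ u_summable _ [a a0 [p1w p2w]] _ _ _ _ [lam_inj _ _].
case=> phi0 [z0 [L2phi0 [nontrivial eig0]]] psi L2psi psi_eq phi z L2phi.
have p1s := abs_summable_exp_weight a0 p1w.
have p2s := abs_summable_exp_weight a0 p2w.
have z0_neq0 := eigvec_second_component_neq0 u_summable L2psi psi_eq lam_inj
  L2phi0 nontrivial eig0.
have secular := eigvec_secular_eq u_summable p1s p2s L2psi psi_eq lam_inj
  L2phi0 z0_neq0 eig0.
split=> [eig | [c [phi_psi ->]]].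
- exists (- z); split; last by rewrite mulrN1 opprK.
  by have := eigvec_first_component u_summable L2psi psi_eq lam_inj L2phi eig; apply.
- by have := eigvec_of_multiple u_summable p1s p2s L2psi psi_eq secular L2phi phi_psi;
    apply.
Qed.
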